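(* Let $n\ge1$ and $\lambda>0$. Let $1=x_0<x_1<\dots<x_m$ be noise amplification factors, $\lambda_j=x_j\lambda$, and let $\gamma_j=\prod_{0\le l\le m,\,l\ne j}\frac{0-x_l}{x_j-x_l}$ be the Lagrange basis polynomials evaluated at $0$; set $\Lambda=\sum_{j=0}^m|\gamma_j|$ and $\|\gamma\|_\infty=\max_j|\gamma_j|$. For each noise level $\lambda_j$ let $R_{\lambda_j}(\theta)\in[-1,1]$ be the noisy response of the sensor at phase $\theta$ (expectation of an observable $O$ with $\|O\|_\infty\le1$), and let $\overline{R}_{\lambda_j}(\theta,N_j)$ be the empirical mean of $N_j$ independent single-shot outcomes. For inference nodes $\theta_1,\dots,\theta_{2n+1}$ define the mitigated response $R_M(\theta_k)=\sum_{j=0}^m\gamma_jR_{\lambda_j}(\theta_k)$ and its estimate $\overline{R}_M(\theta_k,N_k)=\sum_{j=0}^m\gamma_j\overline{R}_{\lambda_j}(\theta_k,N_j)$, where the $N_k$ shots at node $\theta_k$ are allocated as $N_j=N_k|\gamma_j|/\Lambda$. Then, to ensure with a (constant) high probability that $|R_M(\theta_k)-\overline{R}_M(\theta_k,N_k)|\le\chi$ for all nodes $\theta_k$, it suffices that the number of shots used at each node satisfies $N_k\in\Omega\!\Big(\frac{\Lambda^3}{\chi^2\max_j|\gamma_j|}\log(n)\Big)$.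
   Context: This is the zero-noise extrapolation (Richardson extrapolation) estimate of the noiseless response from responses measured at boosted noise levels $\lambda_j$. Single-shot outcomes are eigenvalues of $O$, hence lie in $[-1,1]$; all shots are independent. *)

From HB Require Import structures.
From mathcomp Require Import all_boot all_order all_algebra.
From mathcomp Require Import all_classical all_reals.
From mathcomp Require Import exp.
Set Implicit Arguments. Unset Strict Implicit. Unset Printing Implicit Defensive.
Import Order.TTheory GRing.Theory Num.Theory.
Local Open Scope ring_scope.

Section ZNE.
Variable R : realType.

Definition lagr0 (m : nat) (x : 'I_m.+1 -> R) (j : 'I_m.+1) : R :=
  \prod_(l < m.+1 | l != j) ((0 - x l) / (x j - x l)).

Definition Lambda (m : nat) (x : 'I_m.+1 -> R) : R :=
  \sum_(j < m.+1) `|lagr0 x j|.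

Definition gamma_max (m : nat) (x : 'I_m.+1 -> R) : R :=
  \big[Num.max/0]_(j < m.+1) `|lagr0 x j|.

Definition shots (m : nat) (x : 'I_m.+1 -> R) (Nk : nat) (j : 'I_m.+1) : nat :=
  `|Num.ceil ((Nk%:R) * `|lagr0 x j| / Lambda x)|%N.

(* Single-shot outcome model: a finite set E of eigenvalue labels with values
   v : E -> R; at noise level l and phase t the outcome distribution is the
   pmf p l t : E -> R. *)
Definition response (E : finType) (v : E -> R) (p : R -> R -> E -> R)
  (l t : R) : R := \sum_(e : E) p l t e * v e.

(* Probability of an event under the product (= independent) law on
   I-indexed families of outcomes, coordinate i having pmf q i. *)
Definition prodProb (I E : finType) (q : I -> E -> R)
  (A : pred {ffun I -> E}) : R :=
  \sum_(w : {ffun I -> E} | A w) \prod_(i : I) q i (w i).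

(* Index set of all single shots: node k, noise level j, shot number i < N_j *)
Definition shot_index (n m : nat) (x : 'I_m.+1 -> R) (N : 'I_(2 * n).+1 -> nat)
  : finType := {kj : 'I_(2 * n).+1 * 'I_m.+1 & 'I_(shots x (N kj.1) kj.2)}.

Definition emp_mean (n m : nat) (x : 'I_m.+1 -> R) (N : 'I_(2 * n).+1 -> nat)
  (E : finType) (v : E -> R) (w : {ffun shot_index x N -> E})
  (k : 'I_(2 * n).+1) (j : 'I_m.+1) : R :=
  (shots x (N k) j)%:R^-1 *
  \sum_(i < shots x (N k) j) v (w (@existT _ (fun kj : 'I_(2 * n).+1 * 'I_m.+1 =>
                                            'I_(shots x (N kj.1) kj.2)) (k, j) i)).

Definition mitigated (m : nat) (x : 'I_m.+1 -> R) (E : finType) (v : E -> R)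
  (p : R -> R -> E -> R) (lam t : R) : R :=
  \sum_(j < m.+1) lagr0 x j * response v p (x j * lam) t.

Definition mitigated_est (n m : nat) (x : 'I_m.+1 -> R) (N : 'I_(2 * n).+1 -> nat)
  (E : finType) (v : E -> R) (w : {ffun shot_index x N -> E})
  (k : 'I_(2 * n).+1) : R :=
  \sum_(j < m.+1) lagr0 x j * emp_mean v w k j.

Definition shot_law (n m : nat) (x : 'I_m.+1 -> R) (N : 'I_(2 * n).+1 -> nat)
  (E : finType) (p : R -> R -> E -> R) (lam : R) (theta : 'I_(2 * n).+1 -> R)
  (s : shot_index x N) : E -> R :=
  p (x (tag s).2 * lam) (theta (tag s).1).

End ZNE.

From HB Require Import structures.
From mathcomp Require Import all_boot all_order all_algebra.
From mathcomp Require Import all_classical all_reals.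
From mathcomp Require Import sequences exp.
From mathcomp Require Import ring lra.
Import Order.TTheory GRing.Theory Num.Theory.
Local Open Scope ring_scope.
Set Implicit Arguments. Unset Strict Implicit. Unset Printing Implicit Defensive.

(* At a node theta_k the estimation error is a sum of independent centred
   shot contributions (gamma_j / N_j) (R_{lambda_j}(theta_k) - outcome).  The
   allocation gives N_j >= N_k |gamma_j| / Lambda, so each contribution has
   range at most 2 Lambda / N_k and the squared ranges add up to at most
   4 Lambda^2 / N_k.  A Chernoff bound, using e^y <= 1 + y + 2 y^2 for
   y <= 1/2, bounds the failure probability at theta_k by
   2 exp (- chi^2 N_k / (32 Lambda^2)), which is at most 2 / n^3 as soon as
   N_k >= 96 Lambda^2 ln n / chi^2; the hypothesis implies this because
   ||gamma||_oo <= Lambda.  A union bound over the 2n+1 nodes gives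
   2 (2n+1) / n^3 <= delta for n >= 6 / delta.  Only the numbers gamma_j
   matter. *)

Lemma expR_le1Dx_sqr (R : realType) (y : R) :
  y <= 1 / 2 -> expR y <= 1 + y + 2 * y ^+ 2.
Proof.
move=> y_le.
have expRyN : expR y * expR (- y) = 1 by rewrite -expRD subrr expR0.
have := expR_ge1Dx (- y); have := expR_gt0 y; nra.
Qed.

Lemma centered_mgf_le (R : realType) (E : finType) (f Y : E -> R) (c t : R) :
  (forall e, 0 <= f e) -> \sum_e f e = 1 -> \sum_e f e * Y e = 0 ->
  (forall e, `|Y e| <= c) -> 0 <= t -> t * c <= 1 / 2 ->
  \sum_e f e * expR (t * Y e) <= expR (2 * t ^+ 2 * c ^+ 2).
Proof.
move=> f_ge0 f_sum1 f_centered Y_le t_ge0 tc_le.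
have abs_tY_le e : `|t * Y e| <= t * c by rewrite normrM ger0_norm // ler_wpM2l.
apply: (@le_trans _ _ (\sum_e f e * (1 + t * Y e + 2 * t ^+ 2 * c ^+ 2))).
  apply: ler_sum => e _; apply: ler_wpM2l => //.
  have /ler_normlP[tY_ge tY_le] := abs_tY_le e.
  have tc_ge0 : 0 <= t * c by apply: le_trans (abs_tY_le e).
  have tY_half : t * Y e <= 1 / 2 by lra.
  by apply: le_trans (expR_le1Dx_sqr tY_half) _; nra.
have -> : \sum_e f e * (1 + t * Y e + 2 * t ^+ 2 * c ^+ 2) =
    \sum_e f e + t * (\sum_e f e * Y e) + 2 * t ^+ 2 * c ^+ 2 * \sum_e f e.
  by rewrite !mulr_sumr -!big_split; apply: eq_bigr => e _ /=; ring.
by rewrite f_sum1 f_centered mulr0 addr0 mulr1 expR_ge1Dx.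
Qed.

Section ProductProbability.
Variables (R : realType) (I E : finType) (q : I -> E -> R).
Hypothesis q_ge0 : forall i e, 0 <= q i e.
Hypothesis q_sum1 : forall i, \sum_e q i e = 1.

Let weight_ge0 (w : {ffun I -> E}) : 0 <= \prod_i q i (w i).
Proof. exact: prodr_ge0. Qed.

Lemma prodProb_sub (A B : pred {ffun I -> E}) :
  (forall w, A w -> B w) -> prodProb q A <= prodProb q B.
Proof.
move=> subAB; rewrite /prodProb [leLHS]big_mkcond [leRHS]big_mkcond.
apply: ler_sum => w _; case: ifP => [/subAB -> //|_].
by case: ifP.
Qed.

Lemma prodProb_predC (A : pred {ffun I -> E}) :
  prodProb q A = 1 - prodProb q (predC A).
Proof.
have <- : \sum_(w : {ffun I -> E}) \prod_i q i (w i) = 1.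
  by rewrite -bigA_distr_bigA; apply: big1 => i _.
by rewrite (bigID A) /= addrK.
Qed.

Lemma prodProb_predU (A B : pred {ffun I -> E}) :
  prodProb q [pred w | A w || B w] <= prodProb q A + prodProb q B.
Proof.
rewrite /prodProb [leLHS]big_mkcond.
rewrite [X in _ <= X + _]big_mkcond [X in _ <= _ + X]big_mkcond -big_split.
apply: ler_sum => w _ /=.
by case: (A w); case: (B w); rewrite ?addr0 ?add0r ?lerDl.
Qed.

Lemma prodProb_union_bound (K : finType) (G : K -> pred {ffun I -> E}) :
  prodProb q [pred w | ~~ [forall k, G k w]] <=
  \sum_k prodProb q [pred w | ~~ G k w].
Proof.
rewrite /prodProb (eq_bigr (fun k => \sum_(w : {ffun I -> E})
  (if ~~ G k w then \prod_i q i (w i) else 0))); last by move=> k _; rewrite big_mkcond.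
rewrite exchange_big /= [leLHS]big_mkcond; apply: ler_sum => w _ /=.
have sum_ge0 : 0 <= \sum_k (if ~~ G k w then \prod_i q i (w i) else 0).
  by apply: sumr_ge0 => k _; case: ifP.
case: ifP => [/forallPn[k Gk_fail] | _] //.
rewrite (bigD1 k) //= Gk_fail lerDl.
by apply: sumr_ge0 => k' _; case: ifP.
Qed.

Lemma prodProb_sum_gt (Y : I -> E -> R) (c : I -> R) (a t : R) :
  (forall i, \sum_e q i e * Y i e = 0) -> (forall i e, `|Y i e| <= c i) ->
  0 <= t -> (forall i, t * c i <= 1 / 2) ->
  prodProb q [pred w : {ffun I -> E} | a < \sum_i Y i (w i)] <=
  expR (- (t * a) + 2 * t ^+ 2 * \sum_i c i ^+ 2).
Proof.
move=> Y_centered Y_le t_ge0 tc_le.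
have markov : prodProb q [pred w : {ffun I -> E} | a < \sum_i Y i (w i)] <=
    \sum_(w : {ffun I -> E}) \prod_i q i (w i) * expR (t * (\sum_i Y i (w i) - a)).
  rewrite /prodProb [leLHS]big_mkcond; apply: ler_sum => w _ /=.
  case: ifP => [a_lt | _]; last by rewrite mulr_ge0 ?expR_ge0.
  rewrite -[leLHS]mulr1 ler_wpM2l // -expR0 ler_expR.
  by rewrite mulr_ge0 // subr_ge0 ltW.
have factorize : \sum_(w : {ffun I -> E})
      \prod_i q i (w i) * expR (t * (\sum_i Y i (w i) - a)) =
    expR (- (t * a)) * \prod_i \sum_e q i e * expR (t * Y i e).
  rewrite bigA_distr_bigA mulr_sumr; apply: eq_bigr => w _.
  by rewrite mulrBr addrC expRD mulr_sumr expR_sum mulrCA -big_split.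
apply: le_trans markov _; rewrite factorize expRD ler_wpM2l ?expR_ge0 //.
rewrite mulr_sumr expR_sum; apply: ler_prod => i _.
rewrite sumr_ge0 => [|e _]; last by rewrite mulr_ge0 ?expR_ge0.
exact: centered_mgf_le.
Qed.

Lemma prodProb_abs_sum_gt (Y : I -> E -> R) (c : I -> R) (a t : R) :
  (forall i, \sum_e q i e * Y i e = 0) -> (forall i e, `|Y i e| <= c i) ->
  0 <= t -> (forall i, t * c i <= 1 / 2) ->
  prodProb q [pred w : {ffun I -> E} | a < `|\sum_i Y i (w i)|] <=
  2 * expR (- (t * a) + 2 * t ^+ 2 * \sum_i c i ^+ 2).
Proof.
move=> Y_centered Y_le t_ge0 tc_le.
pose YN i e := - Y i e.
have YN_centered i : \sum_e q i e * YN i e = 0.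
  by rewrite (eq_bigr _ (fun e _ => mulrN _ _)) sumrN Y_centered oppr0.
have YN_le i e : `|YN i e| <= c i by rewrite normrN.
apply: (@le_trans _ _ (prodProb q [pred w : {ffun I -> E} | (a < \sum_i Y i (w i))
                                         || (a < \sum_i YN i (w i))])).
  apply: prodProb_sub => w /=; rewrite sumrN.
  by case: (ler0P (\sum_i Y i (w i))) => _ ->; rewrite ?orbT.
apply: le_trans (prodProb_predU _ _) _.
by rewrite mulr2n mulrDl mul1r lerD ?prodProb_sum_gt.
Qed.

End ProductProbability.

Section ShotAllocation.
Variables (R : realType) (m : nat) (x : 'I_m.+1 -> R).

Lemma Lambda_ge0 : 0 <= Lambda x.
Proof. exact: sumr_ge0. Qed.

Lemma abs_lagr0_le_gamma_max j : `|lagr0 x j| <= gamma_max x.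
Proof. by rewrite /gamma_max (bigD1 j) //= le_max lexx. Qed.

Lemma abs_lagr0_le_Lambda j : `|lagr0 x j| <= Lambda x.
Proof. by rewrite /Lambda (bigD1 j) //= lerDl sumr_ge0. Qed.

Lemma gamma_max_le_Lambda : gamma_max x <= Lambda x.
Proof.
apply: (big_ind (fun y => y <= Lambda x)) => //; first exact: Lambda_ge0.
by move=> a b ? ?; rewrite ge_max; apply/andP.
by move=> j _; apply: abs_lagr0_le_Lambda.
Qed.

Lemma sqr_Lambda_le : Lambda x ^+ 2 <= Lambda x ^+ 3 / gamma_max x.
Proof.
have [Lambda_gt0 | Lambda_le0] := ltrP 0 (Lambda x); last first.
  have -> : Lambda x = 0 by apply/eqP; rewrite eq_le Lambda_le0 Lambda_ge0.
  by rewrite !exprS !mul0r.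
have gamma_max_gt0 : 0 < gamma_max x.
  rewrite ltNge; apply/negP => gamma_max_le0.
  have : Lambda x <= \sum_(j < m.+1) 0.
    by apply: ler_sum => j _; apply: le_trans (abs_lagr0_le_gamma_max j) _.
  by rewrite big1 // leNgt Lambda_gt0.
rewrite ler_pdivlMr // [leRHS]exprS mulrC ler_pM2r ?exprn_gt0 //.
exact: gamma_max_le_Lambda.
Qed.

Lemma shot_budget_sqr_Lambda (C chi L K : R) : 0 < chi -> 0 <= C * L ->
  C * (Lambda x ^+ 3 / (chi ^+ 2 * gamma_max x)) * L <= K ->
  C * L * Lambda x ^+ 2 <= chi ^+ 2 * K.
Proof.
move=> chi_gt0 CL_ge0 budget.
rewrite -ler_pdivrMl ?exprn_gt0 // (le_trans _ budget) //.
rewrite [leRHS](_ : _ = chi ^- 2 * (C * L * (Lambda x ^+ 3 / gamma_max x))).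
  by rewrite ler_wpM2l ?ler_wpM2l ?invr_ge0 ?exprn_ge0 ?sqr_Lambda_le // ltW.
by rewrite invfM; ring.
Qed.

Lemma shots_ge (Nk : nat) j :
  Nk%:R * `|lagr0 x j| / Lambda x <= (shots x Nk j)%:R.
Proof.
have ratio_ge0 : 0 <= Nk%:R * `|lagr0 x j| / Lambda x.
  by rewrite divr_ge0 ?mulr_ge0 ?Lambda_ge0.
rewrite /shots natr_absz [`|Num.ceil _|]ger0_norm; first exact: ceil_ge.
by rewrite ceil_ge0 (lt_le_trans _ ratio_ge0) ?ltrN10.
Qed.

Lemma lagr0_eq0_of_shots_eq0 (Nk : nat) j :
  (0 < Nk)%N -> shots x Nk j = 0%N -> lagr0 x j = 0.
Proof.
move=> Nk_gt0 shots_eq0; apply/normr0_eq0/eqP; rewrite eq_le normr_ge0 andbT.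
have [Lambda_gt0 | Lambda_le0] := ltrP 0 (Lambda x).
  have := shots_ge Nk j; rewrite shots_eq0 ler_pdivrMr // mul0r.
  by rewrite pmulr_rle0 // ltr0n.
exact: le_trans (abs_lagr0_le_Lambda j) Lambda_le0.
Qed.

(* The convention [y / 0 = 0] makes the left side vanish when no shot is spent on [j]. *)
Lemma shots_ratio_le (Nk : nat) j :
  (0 < Nk)%N -> `|lagr0 x j| / (shots x Nk j)%:R <= Lambda x / Nk%:R.
Proof.
move=> Nk_gt0; have [->|Nj_neq0] := eqVneq (shots x Nk j) 0%N.
  by rewrite invr0 mulr0 divr_ge0 ?Lambda_ge0.
have [Lambda_gt0 | Lambda_le0] := ltrP 0 (Lambda x); last first.
  have abs_lagr0_eq0 : `|lagr0 x j| = 0.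
    apply/eqP; rewrite eq_le normr_ge0 andbT.
    exact: le_trans (abs_lagr0_le_Lambda j) Lambda_le0.
  by rewrite abs_lagr0_eq0 mul0r divr_ge0 ?Lambda_ge0.
have := shots_ge Nk j.
rewrite ler_pdivrMr // ler_pdivrMr ?ltr0n ?lt0n // mulrAC ler_pdivlMr ?ltr0n //.
by rewrite mulrC [_ * Lambda x]mulrC.
Qed.

End ShotAllocation.

Section ShotIndex.
Variables (R : realType) (n m : nat) (x : 'I_m.+1 -> R) (N : 'I_(2 * n).+1 -> nat).

Definition shot k j (i : 'I_(shots x (N k) j)) : shot_index x N :=
  @existT _ (fun kj : 'I_(2 * n).+1 * 'I_m.+1 => 'I_(shots x (N kj.1) kj.2)) (k, j) i.

Lemma sum_shots (F : shot_index x N -> R) :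
  \sum_s F s = \sum_k \sum_j \sum_(i < shots x (N k) j) F (shot i).
Proof.
pose T (kj : 'I_(2 * n).+1 * 'I_m.+1) := 'I_(shots x (N kj.1) kj.2).
transitivity (\sum_kj \sum_(i : T kj) F (@existT _ T kj i)).
  rewrite (sig_big_dep (fun _ => true) (fun _ _ => true)
    (fun kj i => F (@existT _ T kj i))) /=.
  by apply: eq_bigr => -[[k j] i].
by rewrite pair_bigA; apply: eq_bigr => -[k j].
Qed.

Lemma sum_shots_node k (F : shot_index x N -> R) :
  \sum_s (if (tag s).1 == k then F s else 0) =
  \sum_j \sum_(i < shots x (N k) j) F (shot i).
Proof.
rewrite sum_shots (bigD1 k) //= eqxx [X in _ + X]big1 ?addr0 // => k' k'_neq_k.
by apply: big1 => j _; apply: big1 => i _; rewrite (negbTE k'_neq_k).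
Qed.

Lemma sum_shots_node_tag k (h : 'I_m.+1 -> R) :
  \sum_(s : shot_index x N) (if (tag s).1 == k then h (tag s).2 else 0) =
  \sum_j (shots x (N k) j)%:R * h j.
Proof.
by rewrite sum_shots_node; apply: eq_bigr => j _ /=; rewrite sumr_const card_ord mulr_natl.
Qed.

End ShotIndex.

Section NodeEstimate.
Variables (R : realType) (n m : nat) (x : 'I_m.+1 -> R) (N : 'I_(2 * n).+1 -> nat).
Variables (E : finType) (v : E -> R) (p : R -> R -> E -> R) (lam : R).
Variable theta : 'I_(2 * n).+1 -> R.
Hypothesis v_le1 : forall e, `|v e| <= 1.
Hypothesis p_ge0 : forall l t e, 0 <= p l t e.
Hypothesis p_sum1 : forall l t, \sum_e p l t e = 1.

Lemma abs_response_le1 l t : `|response v p l t| <= 1.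
Proof.
rewrite -(p_sum1 l t); apply: le_trans (ler_norm_sum _ _ _) _.
apply: ler_sum => e _; rewrite normrM ger0_norm // ler_piMr //.
Qed.

Lemma response_centered l t a :
  \sum_e p l t e * (a * (response v p l t - v e)) = 0.
Proof.
rewrite (eq_bigr (fun e => a * response v p l t * p l t e - a * (p l t e * v e)));
  last by move=> e _; ring.
by rewrite sumrB -!mulr_sumr p_sum1 mulr1 subrr.
Qed.

Lemma abs_emp_mean_le1 (w : {ffun shot_index x N -> E}) k j : `|emp_mean v w k j| <= 1.
Proof.
rewrite /emp_mean normrM normfV normr_nat.
have [Nj_eq0|Nj_neq0] := eqVneq (shots x (N k) j) 0%N.
  by rewrite [_^-1](_ : _ = 0) ?mul0r // Nj_eq0 invr0.
rewrite mulrC ler_pdivrMr ?ltr0n ?lt0n // mul1r.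
apply: le_trans (ler_norm_sum _ _ _) _.
apply: le_trans (ler_sum _ (fun i _ => v_le1 _)) _.
by rewrite sumr_const card_ord.
Qed.

Lemma abs_mitigated_dev_le (w : {ffun shot_index x N -> E}) k :
  `|mitigated x v p lam (theta k) - mitigated_est v w k| <= 2 * Lambda x.
Proof.
rewrite /mitigated /mitigated_est -sumrB mulrC /Lambda mulr_suml.
apply: le_trans (ler_norm_sum _ _ _) (ler_sum _ _) => j _.
rewrite -mulrBr normrM ler_wpM2l // (le_trans (ler_normB _ _)) //.
by rewrite lerD ?abs_response_le1 ?abs_emp_mean_le1.
Qed.

Let q := @shot_law R n m x N E p lam theta.

Let shot_dev k j e :=
  lagr0 x j / (shots x (N k) j)%:R * (response v p (x j * lam) (theta k) - v e).

Let node_dev k (s : shot_index x N) e :=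
  if (tag s).1 == k then shot_dev k (tag s).2 e else 0.

Let node_range k (s : shot_index x N) :=
  if (tag s).1 == k then 2 * (`|lagr0 x (tag s).2| / (shots x (N k) (tag s).2)%:R)
  else 0.

Lemma mitigated_dev_sum (w : {ffun shot_index x N -> E}) k : (0 < N k)%N ->
  mitigated x v p lam (theta k) - mitigated_est v w k =
  \sum_s node_dev k s (w s).
Proof.
move=> Nk_gt0; rewrite sum_shots_node /mitigated /mitigated_est -sumrB.
apply: eq_bigr => j _; rewrite /shot_dev /emp_mean /=.
have [->|lagr0_neq0] := eqVneq (lagr0 x j) 0.
  by rewrite !mul0r subr0 big1 // => i _; rewrite !mul0r.
have Nj_neq0 : (shots x (N k) j)%:R != 0 :> R.
  by rewrite pnatr_eq0; apply: contra lagr0_neq0 => /eqP/lagr0_eq0_of_shots_eq0->.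
by rewrite -mulr_sumr sumrB sumr_const card_ord -mulr_natr; field.
Qed.

Lemma node_dev_centered k s : \sum_e q s e * node_dev k s e = 0.
Proof.
rewrite /node_dev; case: eqP => [<-|_]; last by rewrite big1 // => e _; rewrite mulr0.
exact: response_centered.
Qed.

Lemma abs_node_dev_le k s e : `|node_dev k s e| <= node_range k s.
Proof.
rewrite /node_dev /node_range /shot_dev; case: eqP => _; last by rewrite normr0.
rewrite normrM normf_div normr_nat mulrC ler_wpM2r ?divr_ge0 //.
apply: le_trans (ler_normB _ _) _.
by rewrite -[2]/(1 + 1) lerD ?abs_response_le1.
Qed.

Lemma node_range_le k s : (0 < N k)%N -> node_range k s <= 2 * Lambda x / (N k)%:R.
Proof.
move=> Nk_gt0; rewrite /node_range -mulrA; case: eqP => _.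
  by rewrite ler_wpM2l // shots_ratio_le.
by rewrite mulr_ge0 ?divr_ge0 ?Lambda_ge0.
Qed.

Lemma sum_node_range_sqr_le k : (0 < N k)%N ->
  \sum_s node_range k s ^+ 2 <= 4 * Lambda x ^+ 2 / (N k)%:R.
Proof.
move=> Nk_gt0.
pose ratio j := `|lagr0 x j| / (shots x (N k) j)%:R.
have range_sqr s : node_range k s ^+ 2 =
    if (tag s).1 == k then (2 * ratio (tag s).2) ^+ 2 else 0.
  by rewrite /node_range; case: eqP => // _; rewrite expr0n.
rewrite (eq_bigr _ (fun s _ => range_sqr s)).
rewrite (sum_shots_node_tag x N k (fun j => (2 * ratio j) ^+ 2)).
have shots_ratio_sqr j : (shots x (N k) j)%:R * ratio j ^+ 2 = `|lagr0 x j| * ratio j.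
  rewrite /ratio; have [->|Nj_neq0] := eqVneq (shots x (N k) j) 0%N.
    by rewrite invr0 !mulr0 expr0n mul0r.
  by field; rewrite pnatr_eq0.
apply: (@le_trans _ _ (\sum_j 4 * (Lambda x / (N k)%:R) * `|lagr0 x j|)).
  apply: ler_sum => j _; rewrite exprMn mulrCA shots_ratio_sqr.
  have := shots_ratio_le x j Nk_gt0; have := normr_ge0 (lagr0 x j).
  rewrite -/(ratio j); nra.
rewrite -mulr_sumr -/(Lambda x).
by rewrite (_ : 4 * Lambda x ^+ 2 / _ = 4 * (Lambda x / (N k)%:R) * Lambda x) //; ring.
Qed.

Lemma node_failure_le k (chi b : R) : 0 < chi -> 0 < b ->
  b * (32 * Lambda x ^+ 2) <= chi ^+ 2 * (N k)%:R ->
  prodProb q [pred w | ~~ (`|mitigated x v p lam (theta k) - mitigated_est v w k| <= chi)]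
  <= 2 * expR (- b).
Proof.
move=> chi_gt0 b_gt0 budget.
have [Lambda_small | Lambda_large] := lerP (2 * Lambda x) chi.
  rewrite /prodProb big_pred0 ?mulr_ge0 ?expR_ge0 // => w /=.
  by rewrite (le_trans (abs_mitigated_dev_le w k)).
have Lambda_gt0 : 0 < Lambda x by lra.
have Nk_gt0 : (0 < N k)%N.
  have : 0 < chi ^+ 2 * (N k)%:R.
    by apply: lt_le_trans budget; rewrite mulr_gt0 ?mulr_gt0 ?exprn_gt0.
  by rewrite pmulr_rgt0 ?exprn_gt0 // ltr0n.
set K : R := (N k)%:R in budget; have K_gt0 : 0 < K by rewrite ltr0n.
(* the Chernoff parameter minimising [- t chi + 2 t^2 (4 Lambda^2 / K)] *)
pose t := chi * K / (16 * Lambda x ^+ 2).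
have t_ge0 : 0 <= t by rewrite divr_ge0 ?mulr_ge0 ?exprn_ge0 // ltW.
have t_range_le s : t * node_range k s <= 1 / 2.
  apply: le_trans (ler_wpM2l t_ge0 (node_range_le s Nk_gt0)) _.
  rewrite /t -/K [leLHS](_ : _ = chi / (8 * Lambda x)); last by field; lra.
  by rewrite ler_pdivrMr ?mulr_gt0 //; lra.
have q_ge0 s e : 0 <= q s e by apply: p_ge0.
have q_sum1 s : \sum_e q s e = 1 by apply: p_sum1.
apply: (@le_trans _ _ (prodProb q
    [pred w : {ffun shot_index x N -> E} | chi < `|\sum_s node_dev k s (w s)|])).
  by apply: (prodProb_sub q_ge0) => w /=; rewrite mitigated_dev_sum // -ltNge.
apply: le_trans (prodProb_abs_sum_gt q_ge0 q_sum1 chi (node_dev_centered k)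
  (abs_node_dev_le k) t_ge0 t_range_le) _.
rewrite ler_pM2l // ler_expR.
apply: le_trans (lerD (lexx _) (ler_wpM2l _ (sum_node_range_sqr_le Nk_gt0))) _.
  by rewrite mulr_ge0 ?exprn_ge0.
rewrite -/K [leLHS](_ : _ = - (chi ^+ 2 * K / (32 * Lambda x ^+ 2))); last first.
  by rewrite /t; field; lra.
by rewrite lerN2 ler_pdivlMr ?mulr_gt0 ?exprn_gt0.
Qed.

End NodeEstimate.

Lemma expRN_le_invn (R : realType) (n k : nat) (a : R) :
  (0 < n)%N -> k%:R * ln (n%:R : R) <= a -> expR (- a) <= (n%:R ^+ k)^-1.
Proof.
move=> n_gt0 a_ge.
have -> : (n%:R ^+ k)^-1 = expR (- (k%:R * ln (n%:R : R))).
  by rewrite expRN expRM_natl lnK // posrE ltr0n.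
by rewrite ler_expR lerN2.
Qed.

Lemma le_natr_of_ceil (R : realType) (a : R) (n : nat) :
  (`|Num.ceil a|%N <= n)%N -> a <= n%:R.
Proof.
rewrite -(ler_nat R) natr_absz => ceil_le_n; apply: le_trans (ceil_ge a) _.
by apply: le_trans ceil_le_n; rewrite ler_int ler_norm.
Qed.

Lemma nodes_failure_le (R : realType) (delta : R) (n : nat) :
  0 < delta -> (0 < n)%N -> 6 / delta <= n%:R ->
  (2 * n).+1%:R * (2 * (n%:R ^+ 3)^-1) <= delta.
Proof.
move=> delta_gt0 n_gt0 n_ge.
have n_ge1 : 1 <= n%:R :> R by rewrite ler1n.
have n_delta_ge : 6 <= n%:R * delta by rewrite -ler_pdivrMr.
rewrite mulrA ler_pdivrMr ?exprn_gt0 ?ltr0n // -natr1 natrM.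
nra.
Qed.

Theorem mainTheorem2 (R : realType) (delta : R) (hdelta : 0 < delta < 1) :
  exists C : R, 0 < C /\ exists n0 : nat,
  forall (n : nat), (1 <= n)%N -> (n0 <= n)%N ->
  forall (lam : R), 0 < lam ->
  forall (m : nat) (x : 'I_m.+1 -> R),
    x ord0 = 1 -> (forall i j : 'I_m.+1, (i < j)%N -> x i < x j) ->
  forall (E : finType) (v : E -> R), (forall e, `|v e| <= 1) ->
  forall (p : R -> R -> E -> R),
    (forall l t e, 0 <= p l t e) -> (forall l t, \sum_(e : E) p l t e = 1) ->
  forall (theta : 'I_(2 * n).+1 -> R) (chi : R), 0 < chi ->
  forall (N : 'I_(2 * n).+1 -> nat),
    (forall k, C * (Lambda x ^+ 3 / (chi ^+ 2 * gamma_max x)) * ln (n%:R : R)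
               <= (N k)%:R) ->
    1 - delta <=
    prodProb (@shot_law R n m x N E p lam theta)
      [pred w | [forall k : 'I_(2 * n).+1,
         `|mitigated x v p lam (theta k) - mitigated_est v w k| <= chi]].
Proof.
case/andP: hdelta => delta_gt0 _; exists 96; split => //.
exists (`|Num.ceil (6 / delta)|%N + 2)%N.
move=> n _ n_ge lam _ m x _ _ E v v_le1 p p_ge0 p_sum1 theta chi chi_gt0 N budget.
have n_gt1 : (1 < n)%N by apply: leq_trans n_ge; rewrite leq_addl.
have n_large : 6 / delta <= n%:R.
  by apply: le_natr_of_ceil; apply: leq_trans n_ge; rewrite leq_addr.
have ln_n_gt0 : 0 < ln (n%:R : R) by rewrite ln_gt0 // ltr1n.
have b_gt0 : 0 < 3%:R * ln (n%:R : R) by rewrite mulr_gt0.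
have q_sum1 s : \sum_e @shot_law R n m x N E p lam theta s e = 1 by apply: p_sum1.
have budget_sqr k : 3%:R * ln (n%:R : R) * (32 * Lambda x ^+ 2) <= chi ^+ 2 * (N k)%:R.
  have CL_ge0 : 0 <= 96 * ln (n%:R : R) by rewrite mulr_ge0 // ltW.
  by have := shot_budget_sqr_Lambda chi_gt0 CL_ge0 (budget k); lra.
have q_ge0 s e : 0 <= @shot_law R n m x N E p lam theta s e by apply: p_ge0.
pose G k (w : {ffun shot_index x N -> E}) :=
  `|mitigated x v p lam (theta k) - mitigated_est v w k| <= chi.
rewrite prodProb_predC // lerD2l lerN2.
apply: le_trans (prodProb_union_bound q_ge0 G) _.
apply: le_trans (ler_sum _ (fun k _ => node_failure_le lam theta v_le1 p_ge0 p_sum1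
  chi_gt0 b_gt0 (budget_sqr k))) _.
rewrite sumr_const card_ord -[_ *+ _]mulr_natl.
apply: le_trans (nodes_failure_le delta_gt0 (ltnW n_gt1) n_large).
by rewrite !ler_wpM2l // expRN_le_invn // ltnW.
Qed.
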